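(* Let $(u_1,\ldots,u_k)$ be the Frenet $k$-frame of a sequence $\{x_i\}$ in $\mathbb R^n$ converging to $x$. Suppose a simplex $T\subseteq\mathbb R^n$ contains every $x_i$. Then there exist $\lambda_1,\ldots,\lambda_k>0$ such that $T$ contains the simplex $\operatorname{conv}(x,x+\lambda_1u_1,\ldots,x+\lambda_1u_1+\cdots+\lambda_ku_k)$.
   Context: For $y\in\mathbb R^n$ and a linear subspace $L$, $\mathsf{proj}_L(y)$ is the orthogonal projection of $y$ onto $L$. Frenet frame of a sequence: let $\sigma=\{x_i\}$ converge to $x$ and let $(u_1,\ldots,u_k)$ be pairwise orthogonal unit vectors. $u_1$ is the Frenet $1$-frame of $\sigma$ if $x_i\ne x$ for all $i$ and $u_1=\lim_{i}(x_i-x)/\|x_i-x\|$. $(u_1,\ldots,u_k)$ is the Frenet $k$-frame of $\sigma$ if $(u_1,\ldots,u_{k-1})$ is its Frenet $(k-1)$-frame and $u_k=\lim_{i}\frac{x_i-x-\mathsf{proj}_{\mathbb Ru_1+\cdots+\mathbb Ru_{k-1}}(x_i-x)}{\|x_i-x-\mathsf{proj}_{\mathbb Ru_1+\cdots+\mathbb Ru_{k-1}}(x_i-x)\|}$, with all denominators nonzero. *)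

From Stdlib Require Import Reals Lra Lia.
Open Scope R_scope.

(* A point of R^n is represented by a function nat -> R; only coordinates
   t < n are meaningful (all notions below only look at those). *)
Definition vec := nat -> R.

Fixpoint rsum (f : nat -> R) (m : nat) : R :=
  match m with
  | O => 0
  | S m' => rsum f m' + f m'
  end.

Definition vadd (a b : vec) : vec := fun t => a t + b t.
Definition vsub (a b : vec) : vec := fun t => a t - b t.
Definition vscale (c : R) (a : vec) : vec := fun t => c * a t.

Definition dot (n : nat) (a b : vec) : R := rsum (fun t => a t * b t) n.
Definition norm (n : nat) (a : vec) : R := sqrt (dot n a a).

Definition veq (n : nat) (a b : vec) : Prop := forall t, (t < n)%nat -> a t = b t.

Definition vconv (n : nat) (xs : nat -> vec) (l : vec) : Prop :=
  Un_cv (fun i => norm n (vsub (xs i) l)) 0.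

Definition orthonormal (n : nat) (u : nat -> vec) (k : nat) : Prop :=
  forall j l, (1 <= j <= k)%nat -> (1 <= l <= k)%nat ->
    dot n (u j) (u l) = if Nat.eqb j l then 1 else 0.

(* orthogonal projection of y onto R u_1 + ... + R u_m
   (for orthonormal u_1..u_m this is sum_j <y,u_j> u_j) *)
Definition proj (n : nat) (u : nat -> vec) (m : nat) (y : vec) : vec :=
  fun t => rsum (fun j => dot n y (u (S j)) * u (S j) t) m.

Definition resid (n : nat) (xs : nat -> vec) (x : vec) (u : nat -> vec)
  (m : nat) (i : nat) : vec :=
  vsub (vsub (xs i) x) (proj n u m (vsub (xs i) x)).

(* The step condition defining u_j:  all denominators nonzero and
   u_j = lim_i resid_i / |resid_i| ; for j = 1 this is exactly
   "x_i <> x for all i and u_1 = lim (x_i - x)/|x_i - x|". *)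
Definition frenet_step (n : nat) (xs : nat -> vec) (x : vec) (u : nat -> vec)
  (j : nat) : Prop :=
  (forall i, norm n (resid n xs x u (j - 1) i) <> 0) /\
  vconv n (fun i => vscale (/ norm n (resid n xs x u (j - 1) i))
                           (resid n xs x u (j - 1) i)) (u j).

Fixpoint frenet_rec (n : nat) (xs : nat -> vec) (x : vec) (u : nat -> vec)
  (k : nat) : Prop :=
  match k with
  | O => True
  | S k' => frenet_rec n xs x u k' /\ frenet_step n xs x u (S k')
  end.

Definition frenet_frame (n : nat) (xs : nat -> vec) (x : vec) (u : nat -> vec)
  (k : nat) : Prop :=
  orthonormal n u k /\ frenet_rec n xs x u k.

Definition in_conv (n : nat) (m : nat) (p : nat -> vec) (y : vec) : Prop :=
  exists c : nat -> R,
    (forall j, (j <= m)%nat -> 0 <= c j) /\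
    rsum c (S m) = 1 /\
    veq n y (fun t => rsum (fun j => c j * p j t) (S m)).

Definition aff_indep (n : nat) (m : nat) (p : nat -> vec) : Prop :=
  forall c : nat -> R,
    rsum c (S m) = 0 ->
    veq n (fun t => rsum (fun j => c j * p j t) (S m)) (fun _ => 0) ->
    forall j, (j <= m)%nat -> c j = 0.

Definition is_simplex (n : nat) (T : vec -> Prop) : Prop :=
  exists (m : nat) (v : nat -> vec),
    aff_indep n m v /\ forall y, T y <-> in_conv n m v y.

Definition frame_vertices (x : vec) (lam : nat -> R) (u : nat -> vec) : nat -> vec :=
  fun j => fun t => x t + rsum (fun l => lam (S l) * u (S l) t) j.

From Stdlib Require Import Reals Lra Lia.
Open Scope R_scope.

(* A simplex is a polyhedron: it is cut out by finitely many affine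
   inequalities phi_q >= 0 (its barycentric coordinates, obtained from a dual
   basis of its edge vectors, together with the equations of its affine hull).
   Fix such a phi = <g, .> + h, nonnegative at every x_i.  In the limit
   phi(x) >= 0.  If moreover phi(x) = 0 and <g, u_l> = 0 for l < j, then <g, .>
   applied to the j-th normalised residual of x_i equals phi(x_i) / |residual|
   >= 0, so <g, u_j> >= 0 in the limit.  Thus (phi_q(x), <g_q,u_1>, ...,
   <g_q,u_k>) is lexicographically nonnegative for every q, and an elementary
   choice of l_1, l_2, ... > 0 (each small compared to the previous ones) makes
   all partial sums phi_q(x) + l_1 <g_q,u_1> + ... + l_j <g_q,u_j> nonnegative.
   These are the values of phi_q at the vertices of the frame simplex, and an
   affine functional nonnegative at the vertices is nonnegative on their convex
   hull. *)

Lemma rsum_ext (f g : nat -> R) (m : nat) :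
  (forall i, (i < m)%nat -> f i = g i) -> rsum f m = rsum g m.
Proof.
  induction m as [|m IH]; simpl; intros H; [reflexivity|].
  rewrite IH by (intros; apply H; lia). rewrite H by lia. reflexivity.
Qed.

Lemma rsum_plus (f g : nat -> R) (m : nat) :
  rsum (fun i => f i + g i) m = rsum f m + rsum g m.
Proof. induction m as [|m IH]; simpl; [lra|]. rewrite IH; lra. Qed.

Lemma rsum_scal (c : R) (f : nat -> R) (m : nat) :
  rsum (fun i => c * f i) m = c * rsum f m.
Proof. induction m as [|m IH]; simpl; [lra|]. rewrite IH; lra. Qed.

Lemma rsum_scal_r (c : R) (f : nat -> R) (m : nat) :
  rsum (fun i => f i * c) m = rsum f m * c.
Proof. induction m as [|m IH]; simpl; [lra|]. rewrite IH; lra. Qed.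

Lemma rsum_zero (f : nat -> R) (m : nat) :
  (forall i, (i < m)%nat -> f i = 0) -> rsum f m = 0.
Proof.
  induction m as [|m IH]; simpl; intros H; [reflexivity|].
  rewrite IH by (intros; apply H; lia). rewrite H by lia. ring.
Qed.

(* Splitting off the first term: the recursion of [rsum] splits off the last one. *)
Lemma rsum_shift (f : nat -> R) (m : nat) :
  rsum f (S m) = f 0%nat + rsum (fun i => f (S i)) m.
Proof. induction m as [|m IH]; simpl in *; [lra|]. rewrite IH; lra. Qed.

Lemma rsum_swap (F : nat -> nat -> R) (a b : nat) :
  rsum (fun i => rsum (fun j => F i j) b) a = rsum (fun j => rsum (fun i => F i j) a) b.
Proof.
  induction a as [|a IH]; simpl.
  - symmetry; apply rsum_zero; reflexivity.
  - rewrite IH, <- rsum_plus; reflexivity.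
Qed.

Lemma rsum_nonneg (f : nat -> R) (m : nat) :
  (forall i, (i < m)%nat -> 0 <= f i) -> 0 <= rsum f m.
Proof.
  induction m as [|m IH]; simpl; intros H; [lra|].
  pose proof (H m ltac:(lia)); pose proof (IH ltac:(intros; apply H; lia)); lra.
Qed.

Lemma rsum_le (f g : nat -> R) (m : nat) :
  (forall i, (i < m)%nat -> f i <= g i) -> rsum f m <= rsum g m.
Proof.
  induction m as [|m IH]; simpl; intros H; [lra|].
  pose proof (H m ltac:(lia)); pose proof (IH ltac:(intros; apply H; lia)); lra.
Qed.

Lemma rsum_abs (f : nat -> R) (m : nat) : Rabs (rsum f m) <= rsum (fun i => Rabs (f i)) m.
Proof.
  induction m as [|m IH]; simpl; [rewrite Rabs_R0; lra|].
  eapply Rle_trans; [apply Rabs_triang | lra].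
Qed.

Lemma rsum_term_le (f : nat -> R) (m t : nat) :
  (forall i, (i < m)%nat -> 0 <= f i) -> (t < m)%nat -> f t <= rsum f m.
Proof.
  induction m as [|m IH]; intros H Ht; [lia|]. simpl.
  pose proof (H m ltac:(lia)).
  destruct (Nat.eq_dec t m) as [->|Hne].
  - pose proof (rsum_nonneg f m ltac:(intros; apply H; lia)); lra.
  - pose proof (IH ltac:(intros; apply H; lia) ltac:(lia)); lra.
Qed.

Lemma rsum_delta (f : nat -> R) (m j : nat) : (j < m)%nat ->
  rsum (fun l => f l * (if Nat.eqb j l then 1 else 0)) m = f j.
Proof.
  induction m as [|m IH]; intros H; [lia|]. simpl.
  destruct (Nat.eqb_spec j m) as [->|Hne].
  - rewrite rsum_zero; [ring|].
    intros i Hi; destruct (Nat.eqb_spec m i); [lia|ring].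
  - rewrite IH by lia; ring.
Qed.

Lemma dot_comm (n : nat) (a b : vec) : dot n a b = dot n b a.
Proof. unfold dot; apply rsum_ext; intros; ring. Qed.

Lemma dot_ext_l (n : nat) (a a' b : vec) :
  (forall t, (t < n)%nat -> a t = a' t) -> dot n a b = dot n a' b.
Proof. intros H; unfold dot; apply rsum_ext; intros t Ht; rewrite H; auto. Qed.

Lemma dot_ext_r (n : nat) (a b b' : vec) :
  (forall t, (t < n)%nat -> b t = b' t) -> dot n a b = dot n a b'.
Proof. intros H; unfold dot; apply rsum_ext; intros t Ht; rewrite H; auto. Qed.

Lemma dot_lin_l (n : nat) (p q : R) (a b c : vec) :
  dot n (fun t => p * a t + q * b t) c = p * dot n a c + q * dot n b c.
Proof. unfold dot. rewrite <- !rsum_scal, <- rsum_plus. apply rsum_ext; intros; ring. Qed.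

Lemma dot_lin_r (n : nat) (p q : R) (a b c : vec) :
  dot n c (fun t => p * a t + q * b t) = p * dot n c a + q * dot n c b.
Proof. rewrite dot_comm, dot_lin_l, (dot_comm n a), (dot_comm n b); reflexivity. Qed.

Lemma dot_rsum_l (n : nat) (c : nat -> R) (w : nat -> vec) (m : nat) (z : vec) :
  dot n (fun t => rsum (fun j => c j * w j t) m) z = rsum (fun j => c j * dot n (w j) z) m.
Proof.
  unfold dot.
  rewrite (rsum_ext _ (fun t => rsum (fun j => c j * w j t * z t) m))
    by (intros; rewrite <- rsum_scal_r; reflexivity).
  rewrite rsum_swap. apply rsum_ext; intros.
  rewrite <- rsum_scal. apply rsum_ext; intros; ring.
Qed.

Lemma dot_rsum_r (n : nat) (c : nat -> R) (w : nat -> vec) (m : nat) (z : vec) :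
  dot n z (fun t => rsum (fun j => c j * w j t) m) = rsum (fun j => c j * dot n z (w j)) m.
Proof.
  rewrite dot_comm, dot_rsum_l. apply rsum_ext; intros; rewrite dot_comm; reflexivity.
Qed.

Lemma dot_sub_r (n : nat) (g a b : vec) : dot n g (vsub a b) = dot n g a - dot n g b.
Proof.
  rewrite (dot_ext_r n g (vsub a b) (fun t => 1 * a t + (-1) * b t))
    by (intros; unfold vsub; ring).
  rewrite dot_lin_r; ring.
Qed.

Lemma dot_vadd_r (n : nat) (g a b : vec) : dot n g (vadd a b) = dot n g a + dot n g b.
Proof.
  rewrite (dot_ext_r n g (vadd a b) (fun t => 1 * a t + 1 * b t))
    by (intros; unfold vadd; ring).
  rewrite dot_lin_r; ring.
Qed.

Lemma dot_vscale_r (n : nat) (g : vec) (c : R) (a : vec) :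
  dot n g (vscale c a) = c * dot n g a.
Proof.
  rewrite (dot_ext_r n g (vscale c a) (fun t => c * a t + 0 * a t))
    by (intros; unfold vscale; ring).
  rewrite dot_lin_r; ring.
Qed.

Lemma dot_nonneg (n : nat) (a : vec) : 0 <= dot n a a.
Proof. apply rsum_nonneg; intros; nra. Qed.

Lemma dot_self_zero (n : nat) (a : vec) : dot n a a = 0 -> veq n a (fun _ => 0).
Proof.
  intros H t Ht.
  pose proof (rsum_term_le (fun t => a t * a t) n t ltac:(intros; nra) Ht).
  unfold dot in H; nra.
Qed.

Lemma coord_le_norm (n : nat) (a : vec) (t : nat) : (t < n)%nat -> Rabs (a t) <= norm n a.
Proof.
  intros Ht. unfold norm. rewrite <- sqrt_Rsqr_abs. apply sqrt_le_1_alt.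
  apply (rsum_term_le (fun t => a t * a t)); [intros; nra | exact Ht].
Qed.

Lemma dot_bound (n : nat) (g v : vec) :
  Rabs (dot n g v) <= rsum (fun t => Rabs (g t)) n * norm n v.
Proof.
  eapply Rle_trans; [apply rsum_abs|]. rewrite <- rsum_scal_r.
  apply rsum_le; intros t Ht. rewrite Rabs_mult.
  apply Rmult_le_compat_l; [apply Rabs_pos | apply coord_le_norm; exact Ht].
Qed.

Lemma dot_limit (n : nat) (g : vec) (z : nat -> vec) (l : vec) :
  vconv n z l -> Un_cv (fun i => dot n g (z i)) (dot n g l).
Proof.
  unfold vconv, Un_cv. intros H eps Heps.
  set (S := rsum (fun t => Rabs (g t)) n).
  assert (HS : 0 <= S) by (apply rsum_nonneg; intros; apply Rabs_pos).
  assert (Hd : 0 < eps / (S + 1)) by (apply Rdiv_lt_0_compat; lra).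
  destruct (H _ Hd) as [N HN]. exists N. intros i Hi.
  specialize (HN i Hi). unfold R_dist in *.
  rewrite Rminus_0_r, Rabs_pos_eq in HN by apply sqrt_pos.
  rewrite <- dot_sub_r. eapply Rle_lt_trans; [apply dot_bound|]. fold S.
  apply Rle_lt_trans with (S * (eps / (S + 1))); [apply Rmult_le_compat_l; lra|].
  apply Rlt_le_trans with ((S + 1) * (eps / (S + 1))); [nra | right; field; lra].
Qed.

Lemma lim_ge (s : nat -> R) (l a : R) : Un_cv s l -> (forall i, a <= s i) -> a <= l.
Proof.
  intros H Hs. destruct (Rle_lt_dec a l) as [|Hlt]; [assumption|].
  destruct (H (a - l)) as [N HN]; [lra|].
  specialize (HN N (le_n _)). specialize (Hs N).
  unfold R_dist in HN. rewrite Rabs_pos_eq in HN by lra. lra.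
Qed.

(** * Affine functionals and polyhedra *)

Definition affine (n : nat) (phi : vec -> R) : Prop :=
  exists (g : vec) (h : R), forall y, phi y = dot n g y + h.

Definition polyhedron (n : nat) (P : vec -> Prop) : Prop :=
  exists (N : nat) (phi : nat -> vec -> R),
    (forall q, (q < N)%nat -> affine n (phi q)) /\
    forall y, P y <-> forall q, (q < N)%nat -> 0 <= phi q y.

Lemma affine_ext (n : nat) (phi psi : vec -> R) :
  (forall y, phi y = psi y) -> affine n phi -> affine n psi.
Proof. intros E [g [h H]]. exists g, h. intros y; rewrite <- E; auto. Qed.

Lemma affine_const (n : nat) (c : R) : affine n (fun _ => c).
Proof.
  exists (fun _ => 0), c. intros y. unfold dot. rewrite rsum_zero; [ring|]. intros; ring.
Qed.

Lemma affine_lincomb (n : nat) (p q : R) (phi psi : vec -> R) :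
  affine n phi -> affine n psi -> affine n (fun y => p * phi y + q * psi y).
Proof.
  intros [g [h H]] [g' [h' H']].
  exists (fun t => p * g t + q * g' t), (p * h + q * h'). intros y.
  rewrite dot_lin_l, H, H'; ring.
Qed.

Lemma affine_rsum (n : nat) (phi : nat -> vec -> R) (m : nat) :
  (forall j, (j < m)%nat -> affine n (phi j)) ->
  affine n (fun y => rsum (fun j => phi j y) m).
Proof.
  induction m as [|m IH]; intros H; simpl; [apply affine_const|].
  apply (affine_ext n (fun y => 1 * rsum (fun j => phi j y) m + 1 * phi m y));
    [intros; ring|].
  apply affine_lincomb; [apply IH; intros; apply H | apply H]; lia.
Qed.

Lemma affine_dot_sub (n : nat) (a v0 : vec) : affine n (fun y => dot n a (vsub y v0)).
Proof. exists a, (- dot n a v0). intros y. rewrite dot_sub_r; ring. Qed.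

Lemma affine_coord (n t : nat) : (t < n)%nat -> affine n (fun y => y t).
Proof.
  intros Ht. exists (fun s => if Nat.eqb t s then 1 else 0), 0. intros y. unfold dot.
  rewrite (rsum_ext _ (fun s => y s * (if Nat.eqb t s then 1 else 0))) by (intros; ring).
  rewrite rsum_delta by exact Ht; ring.
Qed.

Lemma affine_limit (n : nat) (phi : vec -> R) (z : nat -> vec) (l : vec) :
  affine n phi -> vconv n z l -> Un_cv (fun i => phi (z i)) (phi l).
Proof.
  intros [g [h H]] Hz. rewrite H.
  intros eps Heps. destruct (dot_limit n g z l Hz eps Heps) as [N HN].
  exists N. intros i Hi. rewrite H. unfold R_dist in *.
  replace (dot n g (z i) + h - (dot n g l + h)) with (dot n g (z i) - dot n g l) by ring.
  auto.
Qed.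

Lemma affine_nonneg_conv (n m : nat) (p : nat -> vec) (phi : vec -> R) (y : vec) :
  affine n phi -> (forall j, (j <= m)%nat -> 0 <= phi (p j)) ->
  in_conv n m p y -> 0 <= phi y.
Proof.
  intros [g [h H]] Hp [c [Hc0 [Hc1 Hy]]].
  rewrite H, (dot_ext_r n g y _ Hy), dot_rsum_r.
  replace h with (rsum c (S m) * h) by (rewrite Hc1; ring).
  rewrite <- rsum_scal_r, <- rsum_plus. apply rsum_nonneg. intros j Hj.
  rewrite <- Rmult_plus_distr_l, <- H.
  apply Rmult_le_pos; [apply Hc0 | apply Hp]; lia.
Qed.

Lemma polyhedron_ext (n : nat) (P Q : vec -> Prop) :
  (forall y, P y <-> Q y) -> polyhedron n P -> polyhedron n Q.
Proof.
  intros H [N [phi [Haff HP]]]. exists N, phi. split; [exact Haff|].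
  intros y; rewrite <- H; auto.
Qed.

Lemma polyhedron_halfspace (n : nat) (phi : vec -> R) :
  affine n phi -> polyhedron n (fun y => 0 <= phi y).
Proof.
  intros A. exists 1%nat, (fun _ => phi). split; [intros; exact A|].
  intros y; split; [auto | intros H; apply (H 0%nat); lia].
Qed.

Lemma polyhedron_and (n : nat) (P Q : vec -> Prop) :
  polyhedron n P -> polyhedron n Q -> polyhedron n (fun y => P y /\ Q y).
Proof.
  intros [N1 [p1 [A1 B1]]] [N2 [p2 [A2 B2]]].
  exists (N1 + N2)%nat, (fun q => if Nat.ltb q N1 then p1 q else p2 (q - N1)%nat). split.
  - intros q Hq. destruct (Nat.ltb_spec q N1); [apply A1 | apply A2]; lia.
  - intros y. rewrite B1, B2. split.
    + intros [H1 H2] q Hq. destruct (Nat.ltb_spec q N1); [apply H1 | apply H2]; lia.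
    + intros H. split.
      * intros q Hq. specialize (H q ltac:(lia)).
        destruct (Nat.ltb_spec q N1); [exact H | lia].
      * intros q Hq. specialize (H (q + N1)%nat ltac:(lia)).
        destruct (Nat.ltb_spec (q + N1) N1); [lia|].
        replace (q + N1 - N1)%nat with q in H by lia. exact H.
Qed.

Lemma polyhedron_hyperplane (n : nat) (phi : vec -> R) :
  affine n phi -> polyhedron n (fun y => phi y = 0).
Proof.
  intros A.
  eapply polyhedron_ext;
    [|apply polyhedron_and; apply polyhedron_halfspace;
      [exact A | apply (affine_lincomb n (-1) 0 phi phi A A)]].
  intros y; simpl; split; intros; lra.
Qed.

Lemma polyhedron_forall (n M : nat) (P : nat -> vec -> Prop) :
  (forall i, (i < M)%nat -> polyhedron n (P i)) ->
  polyhedron n (fun y => forall i, (i < M)%nat -> P i y).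
Proof.
  induction M as [|M IH]; intros H.
  - exists 0%nat, (fun _ _ => 0). split; [intros; lia|].
    intros y; split; intros; lia.
  - eapply polyhedron_ext;
      [|apply (polyhedron_and n _ _ (IH ltac:(intros; apply H; lia)) (H M ltac:(lia)))].
    intros y; simpl; split.
    + intros [H1 H2] i Hi. destruct (Nat.eq_dec i M) as [->|]; [exact H2 | apply H1; lia].
    + intros H1; split; auto.
Qed.

(** * Dual bases *)

Definition lin_indep (n m : nat) (w : nat -> vec) : Prop :=
  forall c : nat -> R, (forall t, (t < n)%nat -> rsum (fun l => c l * w l t) m = 0) ->
    forall l, (l < m)%nat -> c l = 0.

(* The map y |-> sum_{j<m} <a_j, y> w_j; for a dual system (a, w) it is a
   projection onto the span of the w_j. *)
Definition dual_proj (n : nat) (a w : nat -> vec) (m : nat) (y : vec) : vec :=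
  fun t => rsum (fun j => dot n (a j) y * w j t) m.

(* (a, w) is a dual system of length m whose projection is self-adjoint; the
   self-adjointness is the invariant that lets the system be extended. *)
Definition dual_system (n : nat) (a w : nat -> vec) (m : nat) : Prop :=
  (forall j l, (j < m)%nat -> (l < m)%nat ->
     dot n (a j) (w l) = if Nat.eqb j l then 1 else 0) /\
  (forall y z, dot n (dual_proj n a w m y) z = dot n y (dual_proj n a w m z)).

Lemma lin_indep_S (n m : nat) (w : nat -> vec) : lin_indep n (S m) w -> lin_indep n m w.
Proof.
  intros H c Hc l Hl.
  set (c' := fun l => if Nat.ltb l m then c l else 0).
  assert (E : forall t, (t < n)%nat -> rsum (fun l => c' l * w l t) (S m) = 0).
  { intros t Ht. simpl. unfold c' at 2. rewrite Nat.ltb_irrefl.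
    rewrite (rsum_ext _ (fun l => c l * w l t)), (Hc t Ht); [ring|].
    intros i Hi; unfold c'; destruct (Nat.ltb_spec i m); [reflexivity | lia]. }
  specialize (H c' E l ltac:(lia)). unfold c' in H.
  destruct (Nat.ltb_spec l m); [exact H | lia].
Qed.

Section DualExtension.
(* Extending a dual system of length m by one vector (Gram-Schmidt style):
   b := w_m - P w_m is orthogonal to w_0..w_{m-1}, and nonzero by independence. *)

Variables (n m : nat) (a w : nat -> vec).
Hypothesis dual : dual_system n a w m.

Let P := dual_proj n a w m.
Let b : vec := fun t => w m t - P (w m) t.

Lemma dual_proj_fixes (l : nat) : (l < m)%nat -> forall t, P (w l) t = w l t.
Proof.
  intros Hl t. unfold P, dual_proj.
  rewrite (rsum_ext _ (fun j => w j t * (if Nat.eqb l j then 1 else 0))).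
  - exact (rsum_delta (fun j => w j t) m l Hl).
  - intros j Hj. rewrite (proj1 dual j l Hj Hl), (Nat.eqb_sym l j); ring.
Qed.

Lemma residual_orth (l : nat) : (l < m)%nat -> dot n b (w l) = 0.
Proof.
  intros Hl. unfold b.
  rewrite (dot_ext_l n _ (fun t => 1 * w m t + (-1) * P (w m) t)) by (intros; ring).
  rewrite dot_lin_l. unfold P. rewrite (proj2 dual).
  rewrite (dot_ext_r n _ (dual_proj n a w m (w l)) (w l))
    by (intros; apply dual_proj_fixes; exact Hl).
  ring.
Qed.

Lemma residual_orth_proj (y : vec) : dot n b (P y) = 0.
Proof.
  unfold P, dual_proj. rewrite dot_rsum_r. apply rsum_zero. intros j Hj.
  rewrite residual_orth by exact Hj; ring.
Qed.

Lemma residual_dot_last : dot n b (w m) = dot n b b.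
Proof.
  rewrite (dot_ext_r n b (w m) (fun t => 1 * b t + 1 * P (w m) t)) by (intros; unfold b; ring).
  rewrite dot_lin_r, residual_orth_proj; ring.
Qed.

Lemma residual_pos : lin_indep n (S m) w -> 0 < dot n b b.
Proof.
  intros Hind. destruct (dot_nonneg n b) as [|E]; [assumption|]. exfalso.
  pose proof (dot_self_zero n b (eq_sym E)) as Hb.
  set (c := fun l => if Nat.ltb l m then - dot n (a l) (w m) else 1).
  assert (Hc : forall t, (t < n)%nat -> rsum (fun l => c l * w l t) (S m) = 0).
  { intros t Ht. simpl. unfold c at 2. rewrite Nat.ltb_irrefl.
    rewrite (rsum_ext _ (fun l => (-1) * (dot n (a l) (w m) * w l t))).
    - rewrite rsum_scal. specialize (Hb t Ht). unfold b, P, dual_proj in Hb. lra.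
    - intros i Hi. unfold c. destruct (Nat.ltb_spec i m); [ring | lia]. }
  specialize (Hind c Hc m ltac:(lia)). unfold c in Hind.
  rewrite Nat.ltb_irrefl in Hind. lra.
Qed.

Let beta := dot n b b.

Definition dual_extend : nat -> vec :=
  fun j => if Nat.ltb j m then (fun t => a j t - (dot n (a j) (w m) / beta) * b t)
           else (fun t => b t / beta).

Lemma dual_extend_proj (y : vec) (t : nat) :
  dual_proj n dual_extend w (S m) y t = P y t + (dot n b y / beta) * b t.
Proof.
  unfold dual_proj at 1. simpl. unfold dual_extend at 2. rewrite Nat.ltb_irrefl.
  rewrite (dot_ext_l n _ (fun t => (/ beta) * b t + 0 * b t)) by (intros; unfold Rdiv; ring).
  rewrite (rsum_ext _ (fun j => 1 * (dot n (a j) y * w j t)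
                               + (- (dot n b y / beta)) * (dot n (a j) (w m) * w j t))).
  - rewrite rsum_plus, !rsum_scal, dot_lin_l. unfold b, P, dual_proj, Rdiv. ring.
  - intros i Hi. unfold dual_extend. destruct (Nat.ltb_spec i m); [|lia].
    rewrite (dot_ext_l n _ (fun t => 1 * a i t + (- (dot n (a i) (w m) / beta)) * b t))
      by (intros; ring).
    rewrite dot_lin_l, (dot_comm n b y). unfold Rdiv; ring.
Qed.

Lemma dual_extend_system : lin_indep n (S m) w -> dual_system n dual_extend w (S m).
Proof.
  intros Hind. pose proof (residual_pos Hind) as Hbeta. fold beta in Hbeta.
  split.
  - intros j l Hj Hl. unfold dual_extend.
    assert (Hbl : dot n b (w l) = if Nat.eqb l m then beta else 0).
    { destruct (Nat.eqb_spec l m) as [->|]; [apply residual_dot_last | apply residual_orth; lia]. }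
    destruct (Nat.ltb_spec j m).
    + rewrite (dot_ext_l n _ (fun t => 1 * a j t + (- (dot n (a j) (w m) / beta)) * b t))
        by (intros; ring).
      rewrite dot_lin_l, Hbl.
      destruct (Nat.eqb_spec l m) as [->|]; destruct (Nat.eqb_spec j m); try lia.
      * field; lra.
      * rewrite (proj1 dual j l) by lia. ring.
    + replace j with m by lia.
      rewrite (dot_ext_l n _ (fun t => (/ beta) * b t + 0 * b t)) by (intros; unfold Rdiv; ring).
      rewrite dot_lin_l, Hbl, (Nat.eqb_sym m l).
      destruct (Nat.eqb_spec l m); [field; lra | ring].
  - intros y z.
    rewrite (dot_ext_l n _ (fun t => 1 * P y t + (dot n b y / beta) * b t))
      by (intros; rewrite dual_extend_proj; ring).
    rewrite (dot_ext_r n y _ (fun t => 1 * P z t + (dot n b z / beta) * b t))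
      by (intros; rewrite dual_extend_proj; ring).
    rewrite dot_lin_l, dot_lin_r. unfold P. rewrite (proj2 dual).
    rewrite (dot_comm n y b). unfold Rdiv; ring.
Qed.

End DualExtension.

Lemma dual_basis (n m : nat) (w : nat -> vec) :
  lin_indep n m w -> exists a : nat -> vec, dual_system n a w m.
Proof.
  induction m as [|m IH]; intros Hind.
  - exists (fun _ _ => 0). split; [intros; lia|].
    intros y z. unfold dot, dual_proj; simpl. rewrite !rsum_zero; [ring | |]; intros; ring.
  - destruct (IH (lin_indep_S n m w Hind)) as [a Ha].
    exists (dual_extend n m a w). apply dual_extend_system; assumption.
Qed.

(** * A simplex is a polyhedron *)

Definition edges (v : nat -> vec) : nat -> vec := fun l => vsub (v (S l)) (v 0%nat).

Lemma rsum_edges (v : nat -> vec) (c : nat -> R) (m t : nat) :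
  rsum (fun l => c l * edges v l t) m
  = rsum (fun l => c l * v (S l) t) m - rsum c m * v 0%nat t.
Proof.
  unfold edges, vsub.
  rewrite (rsum_ext _ (fun l => c l * v (S l) t + (- v 0%nat t) * c l)) by (intros; ring).
  rewrite rsum_plus, rsum_scal; ring.
Qed.

Lemma aff_indep_edges (n m : nat) (v : nat -> vec) :
  aff_indep n m v -> lin_indep n m (edges v).
Proof.
  intros Hind c Hc l Hl.
  set (c' := fun j => match j with 0%nat => - rsum c m | S l => c l end).
  refine (Hind c' _ _ (S l) ltac:(lia)).
  - rewrite rsum_shift. unfold c'. change (fun i => c i) with c. ring.
  - intros t Ht. rewrite rsum_shift. specialize (Hc t Ht).
    rewrite rsum_edges in Hc. unfold c'. lra.
Qed.

Section Barycentric.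
(* With a dual family a of the edges, the barycentric coordinates of y are
   <a_j, y - v_0> (j < m) and 1 - their sum; membership in the simplex means
   they are nonnegative and y lies in the affine hull. *)

Variables (n m : nat) (v a : nat -> vec).
Hypothesis dual : forall j l, (j < m)%nat -> (l < m)%nat ->
  dot n (a j) (edges v l) = if Nat.eqb j l then 1 else 0.

Let bary (j : nat) (y : vec) : R := dot n (a j) (vsub y (v 0%nat)).

Definition barycentric_conditions (y : vec) : Prop :=
  (forall j, (j < m)%nat -> 0 <= bary j y) /\
  0 <= 1 - rsum (fun j => bary j y) m /\
  (forall t, (t < n)%nat -> y t - v 0%nat t - rsum (fun j => bary j y * edges v j t) m = 0).

Lemma barycentric_polyhedron : polyhedron n barycentric_conditions.
Proof.
  assert (Hbary : forall j, affine n (bary j)) by (intros j; apply affine_dot_sub).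
  apply polyhedron_and; [|apply polyhedron_and].
  - apply polyhedron_forall. intros j _. apply polyhedron_halfspace, Hbary.
  - apply polyhedron_halfspace.
    apply (affine_ext n (fun y => 1 * 1 + (-1) * rsum (fun j => bary j y) m));
      [intros; ring|].
    apply affine_lincomb; [apply affine_const | apply affine_rsum; auto].
  - apply polyhedron_forall. intros t Ht. apply polyhedron_hyperplane.
    apply (affine_ext n (fun y => 1 * (1 * y t + 1 * (- v 0%nat t))
                                 + (-1) * rsum (fun j => edges v j t * bary j y) m));
      [intros y; rewrite (rsum_ext _ (fun j => bary j y * edges v j t)) by (intros; ring); ring|].
    apply affine_lincomb; [apply affine_lincomb|].
    + apply affine_coord; exact Ht.
    + apply affine_const.
    + apply affine_rsum. intros j _.
      apply (affine_ext n (fun y => edges v j t * bary j y + 0 * bary j y)); [intros; ring|].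
      apply affine_lincomb; apply Hbary.
Qed.

Lemma in_conv_barycentric (y : vec) : in_conv n m v y <-> barycentric_conditions y.
Proof.
  split.
  - intros [c [Hc0 [Hc1 Hcy]]]. rewrite rsum_shift in Hc1.
    assert (Hd : forall t, (t < n)%nat ->
              vsub y (v 0%nat) t = rsum (fun l => c (S l) * edges v l t) m).
    { intros t Ht. unfold vsub. rewrite (Hcy t Ht), rsum_shift, rsum_edges.
      replace (c 0%nat) with (1 - rsum (fun i => c (S i)) m) by lra. ring. }
    assert (Hbary : forall j, (j < m)%nat -> bary j y = c (S j)).
    { intros j Hj. unfold bary. rewrite (dot_ext_r n _ _ _ Hd), dot_rsum_r.
      rewrite <- (rsum_delta (fun l => c (S l)) m j Hj). apply rsum_ext. intros l Hl.
      rewrite dual by assumption. reflexivity. }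
    split; [|split].
    + intros j Hj. rewrite Hbary by exact Hj. apply Hc0; lia.
    + rewrite (rsum_ext _ (fun j => c (S j))) by exact Hbary.
      pose proof (Hc0 0%nat ltac:(lia)). lra.
    + intros t Ht. rewrite (rsum_ext _ (fun l => c (S l) * edges v l t))
        by (intros; rewrite Hbary; auto).
      rewrite <- Hd by exact Ht. unfold vsub; ring.
  - intros [H1 [H2 H3]].
    exists (fun j => match j with 0%nat => 1 - rsum (fun j => bary j y) m | S l => bary l y end).
    split; [|split].
    + intros [|j] Hj; [exact H2 | apply H1; lia].
    + rewrite rsum_shift. ring.
    + intros t Ht. rewrite rsum_shift. specialize (H3 t Ht).
      rewrite rsum_edges in H3. lra.
Qed.

End Barycentric.

Lemma simplex_polyhedron (n : nat) (T : vec -> Prop) : is_simplex n T -> polyhedron n T.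
Proof.
  intros [m [v [Hind HT]]].
  destruct (dual_basis n m (edges v) (aff_indep_edges n m v Hind)) as [a [Hdual _]].
  apply (polyhedron_ext n (barycentric_conditions n m v a)).
  - intros y. rewrite HT, (in_conv_barycentric n m v a Hdual). reflexivity.
  - apply barycentric_polyhedron.
Qed.

(** * Supporting functionals are lexicographically nonnegative on the frame *)

Lemma frenet_rec_step (n : nat) (xs : nat -> vec) (x : vec) (u : nat -> vec) (k : nat) :
  frenet_rec n xs x u k -> forall j, (1 <= j <= k)%nat -> frenet_step n xs x u j.
Proof.
  induction k as [|k IH]; simpl; intros Hrec j Hj; [lia|].
  destruct Hrec as [Hrec Hstep].
  destruct (Nat.eq_dec j (S k)) as [->|]; [exact Hstep | apply IH; auto; lia].
Qed.

(* If an affine phi is >= 0 along the sequence, vanishes at its limit x and its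
   linear part kills u_1, ..., u_{j-1}, then its linear part is >= 0 on u_j:
   on the j-th normalised residual the linear part equals phi(x_i) / |residual|. *)
Lemma frenet_step_supported (n : nat) (xs : nat -> vec) (x : vec) (u : nat -> vec)
    (j : nat) (phi : vec -> R) :
  affine n phi -> (forall i, 0 <= phi (xs i)) -> phi x = 0 ->
  frenet_step n xs x u j ->
  (forall l, (1 <= l < j)%nat -> phi (vadd x (u l)) = phi x) ->
  phi x <= phi (vadd x (u j)).
Proof.
  intros [g [h Hgh]] Hxs Hx [Hnz Hcv] Hprev.
  assert (Hlin : forall y, phi (vadd x y) - phi x = dot n g y)
    by (intros y; rewrite !Hgh, dot_vadd_r; ring).
  assert (Hg : forall l, (1 <= l < j)%nat -> dot n g (u l) = 0)
    by (intros l Hl; rewrite <- Hlin, Hprev by exact Hl; ring).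
  cut (0 <= dot n g (u j)); [rewrite <- Hlin; lra|].
  apply (lim_ge _ _ 0 (dot_limit n g _ _ Hcv)). intros i.
  rewrite dot_vscale_r. unfold resid. rewrite dot_sub_r.
  unfold proj. rewrite dot_rsum_r, rsum_zero by (intros l Hl; rewrite Hg by lia; ring).
  rewrite dot_sub_r.
  assert (Hpos : 0 < norm n (resid n xs x u (j - 1) i)).
  { pose proof (sqrt_pos (dot n (resid n xs x u (j - 1) i) (resid n xs x u (j - 1) i))).
    specialize (Hnz i). unfold norm in *. lra. }
  specialize (Hxs i). rewrite Hgh in Hxs, Hx.
  apply Rmult_le_pos; [left; apply Rinv_0_lt_compat; exact Hpos | lra].
Qed.

(** * Choosing the step lengths *)

Lemma small_step (N : nat) (c a : nat -> R) : exists lam, 0 < lam /\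
  forall q, (q < N)%nat -> 0 < c q -> 0 < c q + lam * a q.
Proof.
  induction N as [|N [l0 [Hl0 H0]]].
  - exists 1. split; [lra | intros; lia].
  - destruct (Rlt_dec 0 (c N)) as [HcN|HcN].
    + pose proof (Rabs_pos (a N)). pose proof (Rle_abs (- a N)). rewrite Rabs_Ropp in *.
      set (l1 := c N / (Rabs (a N) + 1)).
      assert (Hl1 : 0 < l1) by (apply Rdiv_lt_0_compat; lra).
      assert (El1 : l1 * (Rabs (a N) + 1) = c N) by (unfold l1; field; lra).
      exists (Rmin l0 l1).
      pose proof (Rmin_l l0 l1). pose proof (Rmin_r l0 l1).
      pose proof (Rmin_glb_lt l0 l1 0 Hl0 Hl1).
      split; [assumption|]. intros q Hq Hc.
      destruct (Nat.eq_dec q N) as [->|]; [nra|].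
      specialize (H0 q ltac:(lia) Hc). destruct (Rle_dec 0 (a q)); nra.
    + exists l0. split; [exact Hl0|]. intros q Hq Hc.
      destruct (Nat.eq_dec q N) as [->|]; [lra | apply H0; auto; lia].
Qed.

(* If every vector (c_q, a_q1, ..., a_qK), q < N, is lexicographically >= 0,
   there are step lengths lam_1, ..., lam_K > 0 such that all partial sums
   c_q + lam_1 a_q1 + ... + lam_j a_qj are >= 0: choose lam_1 so that the
   strictly positive c_q stay positive, then recurse on c_q + lam_1 a_q1. *)
Lemma lex_step_lengths (K N : nat) : forall (c : nat -> R) (a : nat -> nat -> R),
  (forall q, (q < N)%nat -> 0 <= c q) ->
  (forall q, (q < N)%nat -> c q = 0 -> forall j, (1 <= j <= K)%nat ->
     (forall l, (1 <= l < j)%nat -> a q l = 0) -> 0 <= a q j) ->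
  exists lam : nat -> R, (forall j, (1 <= j <= K)%nat -> 0 < lam j) /\
    forall q, (q < N)%nat -> forall j, (j <= K)%nat ->
      0 <= c q + rsum (fun l => lam (S l) * a q (S l)) j.
Proof.
  induction K as [|K IH]; intros c a Hc Hlex.
  - exists (fun _ => 0). split; [intros; lia|].
    intros q Hq j Hj. replace j with 0%nat by lia. simpl. specialize (Hc q Hq). lra.
  - destruct (small_step N c (fun q => a q 1%nat)) as [l1 [Hl1 H1]].
    assert (Hcases : forall q, (q < N)%nat -> 0 < c q \/ (c q = 0 /\ 0 <= a q 1%nat)).
    { intros q Hq. destruct (Hc q Hq) as [|E]; [left; assumption | right; split; [auto|]].
      apply (Hlex q Hq (eq_sym E) 1%nat ltac:(lia)). intros; lia. }
    destruct (IH (fun q => c q + l1 * a q 1%nat) (fun q l => a q (S l))) as [lam' [Hp Hs]].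
    + intros q Hq. destruct (Hcases q Hq) as [H|[H H']].
      * specialize (H1 q Hq H). lra.
      * nra.
    + intros q Hq E j Hj Hl. destruct (Hcases q Hq) as [H|[H H']].
      * specialize (H1 q Hq H). lra.
      * assert (a q 1%nat = 0) by nra.
        apply (Hlex q Hq H (S j) ltac:(lia)). intros l Hl'.
        destruct l as [|[|l]]; [lia | assumption | apply Hl; lia].
    + exists (fun j => match j with 0%nat => 0 | 1%nat => l1 | S j' => lam' j' end). split.
      * intros [|[|j]] Hj; [lia | exact Hl1 | apply Hp; lia].
      * intros q Hq [|j] Hj; [simpl; specialize (Hc q Hq); lra|].
        rewrite rsum_shift. specialize (Hs q Hq j ltac:(lia)).
        simpl. lra.
Qed.

Lemma frame_vertex_value (n : nat) (x : vec) (lam : nat -> R) (u : nat -> vec)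
    (phi : vec -> R) (j : nat) :
  affine n phi ->
  phi (frame_vertices x lam u j)
  = phi x + rsum (fun l => lam (S l) * (phi (vadd x (u (S l))) - phi x)) j.
Proof.
  intros [g [h Hgh]].
  assert (Hdir : forall l, phi (vadd x (u l)) - phi x = dot n g (u l))
    by (intros; rewrite !Hgh, dot_vadd_r; ring).
  rewrite (rsum_ext _ (fun l => lam (S l) * dot n g (u (S l))))
    by (intros; rewrite Hdir; reflexivity).
  rewrite !Hgh. unfold frame_vertices.
  rewrite (dot_ext_r n g _ (fun t => 1 * x t + 1 * rsum (fun l => lam (S l) * u (S l) t) j))
    by (intros; ring).
  rewrite dot_lin_r, (dot_rsum_r n (fun l => lam (S l)) (fun l => u (S l))).
  ring.
Qed.

Theorem theorem3p3 (n : nat) (xs : nat -> vec) (x : vec) (u : nat -> vec) (k : nat)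
  (T : vec -> Prop) :
  (1 <= k)%nat ->
  vconv n xs x ->
  frenet_frame n xs x u k ->
  is_simplex n T ->
  (forall i, T (xs i)) ->
  exists lam : nat -> R,
    (forall j, (1 <= j <= k)%nat -> 0 < lam j) /\
    (forall y, in_conv n k (frame_vertices x lam u) y -> T y).
Proof.
  intros _ Hcv [_ Hfr] Hsimplex HT.
  destruct (simplex_polyhedron n T Hsimplex) as [N [phi [Haff HTphi]]].
  assert (Hxs : forall q i, (q < N)%nat -> 0 <= phi q (xs i))
    by (intros q i Hq; apply (proj1 (HTphi (xs i)) (HT i) q Hq)).
  assert (Hx : forall q, (q < N)%nat -> 0 <= phi q x)
    by (intros q Hq; apply (lim_ge _ _ 0 (affine_limit n _ xs x (Haff q Hq) Hcv)); auto).
  destruct (lex_step_lengths k N (fun q => phi q x)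
              (fun q l => phi q (vadd x (u l)) - phi q x)) as [lam [Hlam Hpartial]].
  - exact Hx.
  - intros q Hq Hzero j Hj Hprev.
    enough (phi q x <= phi q (vadd x (u j))) by lra.
    apply (frenet_step_supported n xs x u j (phi q)); auto.
    + apply (frenet_rec_step n xs x u k Hfr); lia.
    + intros l Hl. specialize (Hprev l Hl). lra.
  - exists lam. split; [exact Hlam|].
    intros y Hy. apply HTphi. intros q Hq.
    apply (affine_nonneg_conv n k (frame_vertices x lam u) (phi q) y (Haff q Hq)); auto.
    intros j Hj. rewrite (frame_vertex_value n) by auto. auto.
Qed.
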